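(* For all $n\ge1$, all $\beta\ge n$, and every symmetric positive semidefinite $n\times n$ matrix $M$, $$\beta+\operatorname{tr}(M-I)-\beta(\det M)^{1/\beta}\ \ge\ \frac{3}{64\beta}\Big(1-\frac n\beta\Big)^2\mathcal F\big(\|M-I\|_{\mathrm{HS}}\big),$$ where $\mathcal F(t)=t-\log(1+t)$ and $\|\cdot\|_{\mathrm{HS}}$ is the Hilbert–Schmidt norm.
   Context: The left-hand side is $\mathcal G_\kappa(M)=\frac1\kappa(\det M)^{-\kappa}-\frac1\kappa+\operatorname{tr}(M-I)$ with $\kappa=-1/\beta$. *)

From Stdlib Require Import Reals.
From mathcomp Require Import all_boot all_fingroup matrix.
Set Implicit Arguments. Unset Strict Implicit. Unset Printing Implicit Defensive.

Local Open Scope R_scope.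

Definition Rsum (T : finType) (F : T -> R) : R := \big[Rplus/0]_(i : T) F i.
Definition Rprod (T : finType) (F : T -> R) : R := \big[Rmult/1]_(i : T) F i.

Definition idR (n : nat) : 'M[R]_n := \matrix_(i, j) (if i == j then 1 else 0).
Definition msub (n : nat) (A B : 'M[R]_n) : 'M[R]_n := \matrix_(i, j) (A i j - B i j).

Definition trR (n : nat) (A : 'M[R]_n) : R := Rsum (fun i => A i i).
Definition detR (n : nat) (A : 'M[R]_n) : R :=
  Rsum (fun s : 'S_n => (if odd_perm s then -1 else 1) * Rprod (fun i => A i (s i))).
Definition hsnorm (n : nat) (A : 'M[R]_n) : R :=
  sqrt (Rsum (fun i => Rsum (fun j => (A i j) ^ 2))).

Definition symmetricR (n : nat) (A : 'M[R]_n) : Prop := forall i j, A i j = A j i.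
Definition psdR (n : nat) (A : 'M[R]_n) : Prop :=
  forall x : 'I_n -> R, 0 <= Rsum (fun i => Rsum (fun j => x i * A i j * x j)).

Definition rpow (x y : R) : R := if Rle_dec x 0 then 0 else Rpower x y.

Definition Fcal (t : R) : R := t - ln (1 + t).

From Stdlib Require Import Reals Lra Psatz.
From mathcomp Require Import all_boot all_fingroup all_algebra.
From mathcomp Require ring.
From Coquelicot Require Import Coquelicot.
From mathcomp Require Import Rstruct complex.
Set Implicit Arguments. Unset Strict Implicit. Unset Printing Implicit Defensive.

(* Diagonalising [M] reduces everything to its eigenvalues [e_i >= 0]: the trace,
   determinant and Hilbert-Schmidt norm become [sum (e_i - 1)], [prod e_i] and
   [sqrt (sum (e_i - 1)^2)].  With [p = n / beta] in [(0, 1]], AM-GM applied to the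
   numbers [e_i ^ p] gives [(prod e_i) ^ (1/beta) <= (1/n) sum e_i ^ p], so the left-hand
   side is at least [(beta / n) sum (1 - p + p e_i - e_i ^ p)].  Each Bernoulli gap
   [1 - p + p x - x ^ p] is at least [p (1 - p) / 8 * min ((x - 1)^2, |x - 1|)]
   (strong concavity of [x ^ p] on [(0, 2]], linear growth beyond), while
   [F (sqrt (sum s_i^2)) <= 2 sum min (s_i^2, |s_i|)] since [F t <= min (t^2, t)]. *)

Section RealSymmetricPSD.
Import ring GRing.Theory Num.Theory.
Local Open Scope ring_scope.
Local Open Scope sesquilinear_scope.

Variables (C : numClosedFieldType) (n : nat) (A : 'M[C]_n).
Hypothesis A_real : forall i j, A i j \is Num.real.
Hypothesis A_sym : forall i j, A i j = A j i.
Hypothesis A_psd : forall x : 'I_n -> C, (forall i, x i \is Num.real) ->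
  0 <= \sum_i \sum_j x i * A i j * x j.

(* Writing [u = a + 'i b] with [a, b] real, the form is [a^T A a + b^T A b]
   plus ['i] times an antisymmetric form in [(a, b)], which vanishes since [A]
   is symmetric. *)
Lemma psd_hermitian_form_ge0 (u : 'I_n -> C) :
  0 <= \sum_k \sum_j u j * A j k * (u k)^*.
Proof.
pose a j := 'Re (u j); pose b j := 'Im (u j).
have ua j : u j = a j + 'i * b j by apply: Crect.
have uc k : (u k)^* = a k - 'i * b k by rewrite ua conjC_rect ?Creal_Re ?Creal_Im.
have expand j k : u j * A j k * (u k)^* =
    A j k * (a j * a k + b j * b k) + 'i * (A j k * (b j * a k - a j * b k)).
  rewrite ua uc; apply: (subIr ('i ^+ 2 * A j k * b j * b k)).
  by rewrite [in LHS]sqrCi; ring.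
under eq_bigr => k _ do under eq_bigr => j _ do rewrite expand.
under eq_bigr => k _ do rewrite big_split -mulr_sumr.
rewrite big_split -mulr_sumr /=.
have -> : \sum_k \sum_j A j k * (b j * a k - a j * b k) = 0.
  under eq_bigr => k _ do under eq_bigr => j _ do rewrite mulrBr.
  under eq_bigr => k _ do rewrite sumrB.
  rewrite sumrB exchange_big /=; apply/eqP; rewrite subr_eq0; apply/eqP.
  by apply: eq_bigr => j _; apply: eq_bigr => k _; rewrite A_sym; ring.
rewrite mulr0 addr0 exchange_big /=.
have -> : \sum_j \sum_k A j k * (a j * a k + b j * b k) =
    \sum_j \sum_k a j * A j k * a k + \sum_j \sum_k b j * A j k * b k.
  rewrite -big_split; apply: eq_bigr => j _.
  by rewrite -big_split; apply: eq_bigr => k _ /=; ring.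
by rewrite addr_ge0 // A_psd // => j; rewrite ?Creal_Re ?Creal_Im.
Qed.

Lemma spectral_symmetric_psd : exists d : 'I_n -> C,
  [/\ forall i, 0 <= d i, \tr A = \sum_i d i, \det A = \prod_i d i &
      \sum_i \sum_j (A i j - (i == j)%:R) ^+ 2 = \sum_i (d i - 1) ^+ 2].
Proof.
have A_herm : A ^t* = A by apply/matrixP => i j; rewrite !mxE A_sym; apply/CrealP.
have /orthomx_spectralP eA : A \is normalmx by rewrite qualifE /= A_herm.
have P_unitary := spectral_unitarymx A; have P_unit := spectral_unit A.
set P := spectralmx A in eA P_unitary P_unit *; set D := spectral_diag A in eA.
exists (D 0); split.
- move=> i; have -> : D 0 i = (P *m A *m P ^t*) i i.
    by rewrite -invmx_unitary // eA !mulmxA mulmxV // mul1mx -mulmxA mulmxV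
      // mulmx1 mxE eqxx mulr1n.
  rewrite mxE; under eq_bigr => k _ do rewrite !mxE mulr_suml.
  exact: psd_hermitian_form_ge0.
- by rewrite eA mxtrace_mulC mulmxA mulmxV // mul1mx mxtrace_diag.
- rewrite eA !det_mulmx det_inv det_diag mulrC mulrA.
  by rewrite mulrV ?mul1r // -unitmxE.
- pose D1 := \row_i (D 0 i - 1).
  have eA1 : A - 1%:M = invmx P *m diag_mx D1 *m P.
    have -> : diag_mx D1 = diag_mx D - 1%:M.
      by apply/matrixP => i j; rewrite !mxE; case: eqP => [->|_];
        rewrite ?mulr1n ?mulr0n ?subr0.
    by rewrite mulmxBr mulmxBl -eA mulmx1 mulVmx.
  transitivity (\tr ((A - 1%:M) *m (A - 1%:M))).
    rewrite /mxtrace; apply: eq_bigr => i _; rewrite mxE; apply: eq_bigr => j _.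
    by rewrite !mxE expr2 A_sym eq_sym.
  rewrite eA1 -!mulmxA [P *m _]mulmxA mulmxV // mul1mx mxtrace_mulC -mulmxA.
  rewrite mulmxK // mulmx_diag mxtrace_diag.
  by apply: eq_bigr => i _; rewrite !mxE expr2.
Qed.

End RealSymmetricPSD.

(* MathComp's spectral theorem is stated for normal matrices over a
   [numClosedFieldType], so [M] is diagonalised inside [R[i]]. *)
Section RealSpectral.
Import GRing.Theory Num.Theory.
Local Open Scope ring_scope.

Lemma spectral_symmetric_psdR n (M : 'M[R]_n) : symmetricR M -> psdR M ->
  exists e : 'I_n -> R, [/\ forall i, 0 <= e i, \tr M = \sum_i e i,
     \det M = \prod_i e i &
     \sum_i \sum_j (M i j - (i == j)%:R) ^+ 2 = \sum_i (e i - 1) ^+ 2].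
Proof.
move=> M_sym M_psd; pose A : 'M[R[i]]_n := map_mx (real_complex R) M.
have A_real i j : A i j \is Num.real.
  by rewrite mxE; apply/complex_realP; exists (M i j).
have A_sym i j : A i j = A j i by rewrite !mxE M_sym.
have A_psd (x : 'I_n -> R[i]) : (forall i, x i \is Num.real) ->
    0 <= \sum_i \sum_j x i * A i j * x j.
  move=> x_real; have ex i : x i = (complex.Re (x i))%:C%C by rewrite RRe_real.
  have -> : \sum_i \sum_j x i * A i j * x j =
      (\sum_i \sum_j complex.Re (x i) * M i j * complex.Re (x j))%:C%C.
    rewrite rmorph_sum; apply: eq_bigr => i _; rewrite rmorph_sum.
    by apply: eq_bigr => j _; rewrite !rmorphM /= -!ex mxE.
  by rewrite ler0c; apply/RleP; apply: M_psd.
have [d [d_ge0 d_tr d_det d_hs]] := spectral_symmetric_psd A_real A_sym A_psd.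
have ed i : d i = (complex.Re (d i))%:C%C by rewrite RRe_real // ger0_real.
exists (fun i => complex.Re (d i)); split.
- by move=> i; rewrite -ler0c -ed.
- apply: complexI; rewrite [RHS]rmorph_sum /=.
  under [RHS]eq_bigr => i _ do rewrite -ed.
  by rewrite -d_tr /mxtrace rmorph_sum; apply: eq_bigr => i _; rewrite mxE.
- apply: complexI; rewrite [RHS]rmorph_prod /=.
  under [RHS]eq_bigr => i _ do rewrite -ed.
  by rewrite -d_det det_map_mx.
- apply: complexI; rewrite [RHS]rmorph_sum /=.
  under [RHS]eq_bigr => i _ do rewrite rmorphXn rmorphB /= rmorph1 -ed.
  rewrite -d_hs rmorph_sum; apply: eq_bigr => i _; rewrite rmorph_sum.
  by apply: eq_bigr => j _; rewrite rmorphXn rmorphB rmorph_nat mxE.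
Qed.

End RealSpectral.

Local Open Scope R_scope.

Lemma eigenvalues_symmetric_psd n (M : 'M[R]_n) : symmetricR M -> psdR M ->
  exists e : 'I_n -> R, (forall i, 0 <= e i) /\
    trR (msub M (idR n)) = Rsum (fun i => e i - 1) /\ detR M = Rprod e /\
    hsnorm (msub M (idR n)) = sqrt (Rsum (fun i => (e i - 1) ^ 2)).
Proof.
move=> M_sym M_psd; have [e [e_ge0 e_tr e_det e_hs]] := spectral_symmetric_psdR M_sym M_psd.
have pow2E (x : R) : x ^ 2 = (x ^+ 2)%R by rewrite /= Rmult_1_r GRing.expr2.
exists e; split; [|split; [|split]].
- by move=> i; apply/RleP.
- rewrite /trR /Rsum; under eq_bigr => i _ do rewrite !mxE eqxx.
  change (\sum_i (M i i - 1) = \sum_i (e i - 1))%R.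
  by rewrite !GRing.sumrB -e_tr.
- rewrite /detR /Rsum -[Rprod e]/(\prod_i e i)%R -e_det /determinant.
  by apply: eq_bigr => s _; case: (odd_perm s); rewrite ?GRing.expr1 ?GRing.expr0.
- rewrite /hsnorm /Rsum; congr sqrt; under [RHS]eq_bigr => i _ do rewrite pow2E.
  rewrite -e_hs; apply: eq_bigr => i _; apply: eq_bigr => j _.
  by rewrite pow2E !mxE; case: (i == j).
Qed.

Lemma exp_le_exp x y : x <= y -> exp x <= exp y.
Proof. by case=> [/exp_increasing/Rlt_le | ->]; [|apply: Rle_refl]. Qed.

Lemma ln_le_sub1 t : 0 < t -> ln t <= t - 1.
Proof. by move=> t_gt0; have := exp_ineq1_le (ln t); rewrite exp_ln //; lra. Qed.

Lemma Rpower_sub1 x a : 0 < x -> Rpower x (a - 1) = Rpower x a / x.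
Proof. by move=> x_gt0; rewrite /Rminus Rpower_plus Rpower_Ropp Rpower_1. Qed.

Lemma rpow_le0 x y : x <= 0 -> rpow x y = 0.
Proof. by rewrite /rpow; case: Rle_dec. Qed.

Lemma rpow_gt0 x y : 0 < x -> rpow x y = Rpower x y.
Proof. by rewrite /rpow; case: Rle_dec => // x_le0 x_gt0; lra. Qed.

Lemma rpow_ge0 x y : 0 <= rpow x y.
Proof.
have [x_le0 | x_gt0] := Rle_lt_dec x 0; first by rewrite rpow_le0 //; apply: Rle_refl.
by rewrite rpow_gt0 //; apply/Rlt_le/exp_pos.
Qed.

Section FiniteSums.
Import GRing.Theory Num.Theory.
Variable n : nat.
Implicit Types F G : 'I_n -> R.

Lemma Rsum_le F G : (forall i, F i <= G i) -> Rsum F <= Rsum G.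
Proof. by move=> le_FG; apply/RleP/ler_sum => i _; apply/RleP. Qed.

Lemma Rsum_ge0 F : (forall i, 0 <= F i) -> 0 <= Rsum F.
Proof. by move=> F_ge0; apply/RleP/sumr_ge0 => i _; apply/RleP. Qed.

Lemma Rsum_ge_term F i : (forall j, 0 <= F j) -> F i <= Rsum F.
Proof.
move=> F_ge0; rewrite /Rsum (bigD1 i) //=; apply/RleP.
by rewrite lerDl sumr_ge0 // => j _; apply/RleP.
Qed.

Lemma Rsum_add F G : Rsum (fun i => F i + G i) = Rsum F + Rsum G.
Proof. exact: big_split. Qed.

Lemma Rsum_sub F G : Rsum (fun i => F i - G i) = Rsum F - Rsum G.
Proof. exact: sumrB. Qed.

Lemma Rsum_mull c F : Rsum (fun i => c * F i) = c * Rsum F.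
Proof. by rewrite /Rsum big_distrr. Qed.

Lemma Rsum_sqr_le F : (forall i, 0 <= F i) -> Rsum (fun i => F i ^ 2) <= Rsum F ^ 2.
Proof.
move=> F_ge0; have -> : Rsum F ^ 2 = Rsum (fun i => Rsum F * F i).
  by rewrite Rsum_mull; ring.
apply: Rsum_le => i; have := Rsum_ge_term i F_ge0; have := F_ge0 i; nra.
Qed.

Lemma Rsum_const c : Rsum (fun _ : 'I_n => c) = INR n * c.
Proof. by rewrite /Rsum sumr_const card_ord INRE -[RHS]/(n%:R * c)%R mulr_natl. Qed.

Lemma Rprod_eq0 F i : F i = 0 -> Rprod F = 0.
Proof. by move=> Fi0; rewrite /Rprod (bigD1 i) //= Fi0 Rmult_0_l. Qed.

Lemma Rprod_exp_sum_ln F : (forall i, 0 < F i) ->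
  Rprod F = exp (Rsum (fun i => ln (F i))).
Proof.
move=> F_gt0; rewrite /Rsum (big_morph exp exp_plus exp_0).
by apply: eq_bigr => i _; rewrite exp_ln.
Qed.

End FiniteSums.

Lemma le_of_derive_ge0 (f df : R -> R) a b : a <= b ->
  (forall x, a <= x <= b -> is_derive f x (df x)) ->
  (forall x, a <= x <= b -> 0 <= df x) -> f a <= f b.
Proof.
move=> le_ab f_der df_ge0.
have [-> | ne_ab] := Req_dec a b; first by apply: Rle_refl.
have der x : Rmin a b < x < Rmax a b -> is_derive f x (df x).
  by rewrite Rmin_left ?Rmax_right // => x_ab; apply: f_der; lra.
have cont x : Rmin a b <= x <= Rmax a b -> continuity_pt f x.
  rewrite Rmin_left ?Rmax_right // => x_ab.
  apply/continuity_pt_filterlim/(ex_derive_continuous (V := R_NormedModule)).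
  by exists (df x); apply: f_der.
have [c [c_ab mvt]] := MVT_gen f a b df der cont.
rewrite Rmin_left ?Rmax_right // in c_ab.
have := df_ge0 c ltac:(lra); nra.
Qed.

Lemma ge0_of_derive2_ge0 (f df d2f : R -> R) a b c :
  a <= c <= b -> f c = 0 -> df c = 0 ->
  (forall x, a <= x <= b -> is_derive f x (df x)) ->
  (forall x, a <= x <= b -> is_derive df x (d2f x)) ->
  (forall x, a <= x <= b -> 0 <= d2f x) ->
  forall x, a <= x <= b -> 0 <= f x.
Proof.
move=> c_ab f_c df_c f_der df_der d2f_ge0 x x_ab.
have df_mono y z : a <= y -> y <= z -> z <= b -> df y <= df z.
  move=> a_y y_z z_b; apply: (le_of_derive_ge0 (df := d2f)) => // w w_yz.
    by apply: df_der; lra.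
  by apply: d2f_ge0; lra.
have [le_xc | lt_cx] := Rle_lt_dec x c.
- suff : - f x <= - f c by lra.
  apply: (le_of_derive_ge0 (f := fun y => - f y) (df := fun y => - df y)) => // y y_xc.
    by apply: is_derive_opp; apply: f_der; lra.
  by have := df_mono y c ltac:(lra) ltac:(lra) ltac:(lra); lra.
- rewrite -f_c; apply: (le_of_derive_ge0 (df := df)); first lra.
    by move=> y y_cx; apply: f_der; lra.
  by move=> y y_cx; rewrite -df_c; apply: df_mono; lra.
Qed.

Section BernoulliGap.
Variable p : R.
Hypothesis p_01 : 0 < p <= 1.

Let k := p * (1 - p) / 8.
Let gap x := 1 - p + p * x - Rpower x p.
Let excess x := gap x - k * (x - 1) ^ 2.
Let excess_d1 x := p - p * Rpower x (p - 1) - 2 * k * (x - 1).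
Let excess_d2 x := p * (1 - p) * Rpower x (p - 2) - 2 * k.

Lemma excess_derive x : 0 < x -> is_derive excess x (excess_d1 x).
Proof.
move=> x_gt0; rewrite /excess_d1 Rpower_sub1 // /excess /gap /Rpower.
by auto_derive; [lra | field; lra].
Qed.

Lemma excess_d1_derive x : 0 < x -> is_derive excess_d1 x (excess_d2 x).
Proof.
move=> x_gt0; rewrite /excess_d2 (_ : p - 2 = p - 1 - 1); last ring.
rewrite !Rpower_sub1 // /excess_d1 /Rpower; auto_derive; first lra.
by rewrite -/(Rpower x (p - 1)) Rpower_sub1 // /Rpower; field; lra.
Qed.

(* [x ^ (p - 2) >= 2 ^ (-2)] on [(0, 2]], which is where the constant [1/8] comes from. *)
Lemma excess_d2_ge0 x : 0 < x <= 2 -> 0 <= excess_d2 x.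
Proof.
move=> x_02; have ln2_gt0 : 0 < ln 2 by have := ln_lt_2; lra.
have quarter_le : / 4 <= Rpower x (p - 2).
  have : ln x <= ln 2 by apply: ln_le; lra.
  have -> : / 4 = exp (- (ln 2 + ln 2)).
    by rewrite exp_Ropp exp_plus exp_ln; [field | lra].
  by move=> ln_x; rewrite /Rpower; apply: exp_le_exp; nra.
have : 0 <= p * (1 - p) by nra.
by rewrite /excess_d2; unfold k; nra.
Qed.

Lemma bernoulli_gap_ge_sqr x : 0 < x <= 2 -> k * (x - 1) ^ 2 <= gap x.
Proof.
move=> x_02; have lb_gt0 : 0 < Rmin x 1 by apply: Rmin_glb_lt; lra.
suff : 0 <= excess x by rewrite /excess; lra.
apply: (ge0_of_derive2_ge0 (df := excess_d1) (d2f := excess_d2) (a := Rmin x 1) (b := 2) (c := 1)).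
- by split; [apply: Rmin_r | lra].
- by rewrite /excess /gap /Rpower ln_1 Rmult_0_r exp_0; ring.
- by rewrite /excess_d1 /Rpower ln_1 Rmult_0_r exp_0; ring.
- by move=> y y_ab; apply: excess_derive; lra.
- by move=> y y_ab; apply: excess_d1_derive; lra.
- by move=> y y_ab; apply: excess_d2_ge0; lra.
- by split; [apply: Rmin_l | lra].
Qed.

(* For [y >= 2] the slope [p - p y ^ (p - 1)] of [gap] is at least its value at [2],
   which exceeds [2 k] because [excess_d1] increases on [[1, 2]]. *)
Lemma bernoulli_gap_ge_lin x : 2 <= x -> k * (x - 1) <= gap x.
Proof.
move=> x_ge2; have k_ge0 : 0 <= k by unfold k; nra.
have slope2 : 2 * k <= p - p * Rpower 2 (p - 1).
  have : excess_d1 1 <= excess_d1 2.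
    apply: (le_of_derive_ge0 (df := excess_d2)); first lra.
    + by move=> y y_12; apply: excess_d1_derive; lra.
    + by move=> y y_12; apply: excess_d2_ge0; lra.
  by rewrite /excess_d1 /Rpower ln_1 Rmult_0_r exp_0; lra.
have gap2 := bernoulli_gap_ge_sqr (x := 2) ltac:(lra).
suff : gap 2 - k * (2 - 1) <= gap x - k * (x - 1) by lra.
apply: (le_of_derive_ge0 (f := fun y => gap y - k * (y - 1))
  (df := fun y => p - p * Rpower y (p - 1) - k)); first lra.
- move=> y y_2x; rewrite Rpower_sub1 /gap /Rpower; last lra.
  by auto_derive; [lra | field; lra].
- move=> y y_2x; suff : Rpower y (p - 1) <= Rpower 2 (p - 1) by nra.
  have : ln 2 <= ln y by apply: ln_le; lra.
  by move=> ln_y; rewrite /Rpower; apply: exp_le_exp; nra.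
Qed.

End BernoulliGap.

Lemma bernoulli_gap_ge_min p x : 0 < p <= 1 -> 0 <= x ->
  p * (1 - p) / 8 * Rmin ((x - 1) ^ 2) (Rabs (x - 1)) <= 1 - p + p * x - rpow x p.
Proof.
move=> p_01 x_ge0; have k_ge0 : 0 <= p * (1 - p) / 8 by nra.
have := Rmin_l ((x - 1) ^ 2) (Rabs (x - 1)).
have := Rmin_r ((x - 1) ^ 2) (Rabs (x - 1)).
have [x_le0 | x_gt0] := Rle_lt_dec x 0.
  have -> : x = 0 by lra.
  by rewrite rpow_le0; [rewrite Rabs_left; [nra | lra] | apply: Rle_refl].
rewrite rpow_gt0 //; have [x_le2 | x_gt2] := Rle_lt_dec x 2.
  by have := bernoulli_gap_ge_sqr p_01 (x := x) ltac:(lra); nra.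
have := bernoulli_gap_ge_lin p_01 (x := x) ltac:(lra).
by rewrite Rabs_right; [nra | lra].
Qed.

Lemma sum_bernoulli_gap_ge n (e : 'I_n -> R) p : 0 < p <= 1 -> (forall i, 0 <= e i) ->
  p * (1 - p) / 8 * Rsum (fun i => Rmin ((e i - 1) ^ 2) (Rabs (e i - 1)))
  <= INR n * (1 - p) + p * Rsum e - Rsum (fun i => rpow (e i) p).
Proof.
move=> p_01 e_ge0; rewrite -Rsum_mull -Rsum_const -Rsum_mull -Rsum_add -Rsum_sub.
by apply: Rsum_le => i; apply: bernoulli_gap_ge_min.
Qed.

(* AM-GM: apply [ln t <= t - 1] to [t = y_i / A] with [A] the arithmetic mean. *)
Lemma exp_mean_ln_le_mean n (y : 'I_n -> R) : (0 < n)%nat -> (forall i, 0 < y i) ->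
  exp (Rsum (fun i => ln (y i)) / INR n) <= Rsum y / INR n.
Proof.
move=> n_gt0 y_gt0; have n_pos : 0 < INR n by apply/lt_0_INR/ltP.
set A := Rsum y / INR n; set L := Rsum (fun i => ln (y i)).
have sum_gt0 : 0 < Rsum y.
  have := y_gt0 (Ordinal n_gt0).
  have := Rsum_ge_term (Ordinal n_gt0) (fun j => Rlt_le _ _ (y_gt0 j)); lra.
have A_gt0 : 0 < A by apply: Rdiv_lt_0_compat.
have ln_yi i : ln (y i) <= ln A - 1 + / A * y i.
  have := ln_le_sub1 (Rdiv_lt_0_compat _ _ (y_gt0 i) A_gt0).
  by rewrite ln_div //; lra.
have L_le : L <= INR n * ln A.
  apply: (Rle_trans _ _ _ (Rsum_le ln_yi)).
  rewrite Rsum_add Rsum_const Rsum_mull.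
  have -> : / A * Rsum y = INR n by rewrite /A; field; lra.
  lra.
rewrite -[X in _ <= X]exp_ln //; apply: exp_le_exp.
apply: (Rmult_le_reg_l (INR n)) => //.
by have -> : INR n * (L / INR n) = L by field; lra.
Qed.

Lemma rpow_prod_le_mean n (e : 'I_n -> R) beta :
  (0 < n)%nat -> 0 < beta -> (forall i, 0 <= e i) ->
  rpow (Rprod e) (1 / beta) <= Rsum (fun i => rpow (e i) (INR n / beta)) / INR n.
Proof.
move=> n_gt0 beta_gt0 e_ge0; have n_pos : 0 < INR n by apply/lt_0_INR/ltP.
have [prod0 | prod_ne0] := Req_dec (Rprod e) 0.
  rewrite prod0 rpow_le0; last exact: Rle_refl.
  by apply: Rdiv_le_0_compat => //; apply: Rsum_ge0 => i; apply: rpow_ge0.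
have e_gt0 i : 0 < e i.
  by case: (e_ge0 i) => // ei0; case: prod_ne0; apply: (Rprod_eq0 (esym ei0)).
set p := INR n / beta; set S := Rsum (fun i => ln (e i)).
have := exp_mean_ln_le_mean (y := fun i => exp (p * ln (e i))) n_gt0 (fun i => exp_pos _).
have -> : Rsum (fun i => ln (exp (p * ln (e i)))) = p * S.
  by rewrite -Rsum_mull; apply: eq_bigr => i _; rewrite ln_exp.
have -> : Rsum (fun i => rpow (e i) p) = Rsum (fun i => exp (p * ln (e i))).
  by apply: eq_bigr => i _; rewrite rpow_gt0.
rewrite Rprod_exp_sum_ln // rpow_gt0; last exact: exp_pos.
rewrite /Rpower ln_exp -/S.
by have -> : p * S / INR n = 1 / beta * S by rewrite /p; field; lra.
Qed.

Lemma Fcal_le_id t : 0 <= t -> Fcal t <= t.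
Proof.
move=> t_ge0; rewrite /Fcal; suff : 0 <= ln (1 + t) by lra.
by rewrite -ln_1; apply: ln_le; lra.
Qed.

(* [ln (1 + t) >= t / (1 + t) >= t - t^2] *)
Lemma Fcal_le_sqr t : 0 <= t -> Fcal t <= t ^ 2.
Proof.
move=> t_ge0; rewrite /Fcal.
have := ln_le_sub1 (t := / (1 + t)) ltac:(apply: Rinv_0_lt_compat; lra).
rewrite ln_Rinv; last lra.
have -> : / (1 + t) - 1 = - t + t ^ 2 - t ^ 3 / (1 + t) by field; lra.
have : 0 <= t ^ 3 / (1 + t) by apply: Rdiv_le_0_compat; [apply: pow_le | lra].
lra.
Qed.

Lemma Rmin_sqr_abs_ge0 s : 0 <= Rmin (s ^ 2) (Rabs s).
Proof. by apply: Rmin_glb; [apply: pow2_ge_0 | apply: Rabs_pos]. Qed.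

Lemma sqr_le_min_add_sqr s :
  s ^ 2 <= Rmin (s ^ 2) (Rabs s) + Rmin (s ^ 2) (Rabs s) ^ 2.
Proof.
rewrite -(pow2_abs s); have := Rabs_pos s.
rewrite /Rmin; case: Rle_dec; nra.
Qed.

Lemma Fcal_sqrt_sum_le n (s : 'I_n -> R) :
  Fcal (sqrt (Rsum (fun i => s i ^ 2))) <= 2 * Rsum (fun i => Rmin (s i ^ 2) (Rabs (s i))).
Proof.
set u := fun i => Rmin (s i ^ 2) (Rabs (s i)); set U := Rsum u.
set T := Rsum (fun i => s i ^ 2); set t := sqrt T.
have u_ge0 i : 0 <= u i by apply: Rmin_sqr_abs_ge0.
have U_ge0 : 0 <= U by apply: Rsum_ge0.
have T_le : T <= U + U ^ 2.
  apply: (Rle_trans _ _ _ (Rsum_le (fun i => sqr_le_min_add_sqr (s i)))).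
  by rewrite Rsum_add; apply/Rplus_le_compat_l/Rsum_sqr_le.
have T_ge0 : 0 <= T by apply: Rsum_ge0 => i; apply: pow2_ge_0.
have t_ge0 : 0 <= t by apply: sqrt_pos.
have tt : t ^ 2 = T by rewrite /= Rmult_1_r sqrt_sqrt.
have [U_le1 | U_gt1] := Rle_lt_dec U 1.
- have := Fcal_le_sqr t_ge0; nra.
- have := Fcal_le_id t_ge0; nra.
Qed.

Lemma eigenvalue_inequality n (e : 'I_n -> R) beta :
  (1 <= n)%nat -> INR n <= beta -> (forall i, 0 <= e i) ->
  beta + Rsum (fun i => e i - 1) - beta * rpow (Rprod e) (1 / beta)
   >= 3 / (64 * beta) * (1 - INR n / beta) ^ 2 *
      Fcal (sqrt (Rsum (fun i => (e i - 1) ^ 2))).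
Proof.
move=> n_gt0 n_le_beta e_ge0; have n_ge1 : 1 <= INR n by apply/(le_INR 1)/leP.
have beta_gt0 : 0 < beta by lra.
have amgm := rpow_prod_le_mean n_gt0 beta_gt0 e_ge0.
set p := INR n / beta in amgm *; set E := Rsum e.
set Rs := Rsum (fun i => rpow (e i) p) in amgm.
set U := Rsum (fun i => Rmin ((e i - 1) ^ 2) (Rabs (e i - 1))).
have p_01 : 0 < p <= 1.
  split; first by apply: Rdiv_lt_0_compat; lra.
  by apply: (Rmult_le_reg_r beta) => //; rewrite /p; field_simplify; lra.
have U_ge0 : 0 <= U by apply: Rsum_ge0 => i; apply: Rmin_sqr_abs_ge0.
have beta_amgm : beta * rpow (Rprod e) (1 / beta) <= beta / INR n * Rs.
  have -> : beta / INR n * Rs = beta * (Rs / INR n) by field; lra.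
  by apply: Rmult_le_compat_l; lra.
have gap_scaled : (1 - p) / 8 * U <= beta - INR n + E - beta / INR n * Rs.
  have := sum_bernoulli_gap_ge p_01 e_ge0; rewrite -/U -/E -/Rs => gap_sum.
  have := Rmult_le_compat_l (beta / INR n) _ _ ltac:(apply: Rdiv_le_0_compat; lra) gap_sum.
  have -> : beta / INR n * (p * (1 - p) / 8 * U) = (1 - p) / 8 * U.
    by rewrite /p; field; lra.
  by have -> : beta / INR n * (INR n * (1 - p) + p * E - Rs) =
    beta - INR n + E - beta / INR n * Rs by rewrite /p; field; lra.
set c := 3 / (64 * beta) * (1 - p) ^ 2.
(* [2 c <= (1 - p) / 8] because [6 (1 - p) <= 8 <= 8 beta]. *)
have cU_le : c * (2 * U) <= (1 - p) / 8 * U.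
  have -> : c * (2 * U) = (1 - p) / 8 * U * (6 * (1 - p) / (8 * beta)).
    by rewrite /c; field; lra.
  have : 6 * (1 - p) / (8 * beta) <= 1.
    by apply: (Rmult_le_reg_r (8 * beta)); [lra | field_simplify; lra].
  have : 0 <= (1 - p) / 8 * U by apply: Rmult_le_pos; lra.
  nra.
have c_ge0 : 0 <= c by apply: Rmult_le_pos; [apply: Rdiv_le_0_compat; lra | apply: pow2_ge_0].
have := Rmult_le_compat_l c _ _ c_ge0 (Fcal_sqrt_sum_le (fun i => e i - 1)).
rewrite Rsum_sub Rsum_const -/E -/U; lra.
Qed.

Theorem lemma3 (n : nat) (beta : R) (M : 'M[R]_n) :
  (1 <= n)%nat ->
  INR n <= beta ->
  symmetricR M -> psdR M ->
  beta + trR (msub M (idR n)) - beta * rpow (detR M) (1 / beta)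
   >= 3 / (64 * beta) * (1 - INR n / beta) ^ 2 * Fcal (hsnorm (msub M (idR n))).
Proof.
move=> n_ge1 n_le_beta M_sym M_psd.
have [e [e_ge0 [-> [-> ->]]]] := eigenvalues_symmetric_psd M_sym M_psd.
exact: eigenvalue_inequality.
Qed.
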